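(* In the FAVANO process, assume each $\nabla f_i$ is $L$-Lipschitz and the stochastic gradients have bounded variance $\sigma^2$, and assume $\eta<\frac{1}{4LK^2}$. Then for every client $i$, every time step $t\ge0$ and every local step $q\in\{1,\dots,K\}$, $$\mathbb{E}\|h^i_{t+1,q}\|^2\le B^i_t:=\frac{\sigma^2}{K^2}+16L^2\,\mathbb{E}\|w^i_t-\mu_t\|^2+8\,\mathbb{E}\|\nabla f_i(\mu_t)\|^2 .$$
   Context: FAVANO process. Fix integers $n\ge1$, $1\le s\le n$, $K\ge1$, $d\ge1$, a step size $\eta>0$ and differentiable $f_1,\dots,f_n:\mathbb{R}^d\to\mathbb{R}$, $f=\frac1n\sum_i f_i$. All random variables live on one probability space. For each client $i$ a stochastic gradient oracle returns, at a query point $x$, $\widetilde g^i(x)=\nabla f_i(x)+\xi$ where, conditionally on everything generated before the query (including $x$), $\xi$ has mean zero (each query uses fresh noise). Initialize $w_0\in\mathbb{R}^d$ deterministic and $w_0^i=w_0$ for all $i$. For each $t\ge1$, each client $i$ and each $q\ge1$ define recursively $\widetilde h^i_{t,q}=\widetilde g^i\big(w^i_{t-1}-\eta\sum_{r=1}^{q-1}\widetilde h^i_{t,r}\big)$ and $h^i_{t,q}=\nabla f_i\big(w^i_{t-1}-\eta\sum_{r=1}^{q-1}\widetilde h^i_{t,r}\big)$. At each $t\ge1$ there are random integers $E^1_t,\dots,E^n_t\ge0$ with $\mathbf{P}(E^i_t>0)>0$, and a random subset $\mathcal{S}_t\subseteq\{1,\dots,n\}$ uniformly distributed among subsets of size $s$;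 the family $(\mathcal S_t,E^1_t,\dots,E^n_t)$ is independent of all the other randomness (the past up to time $t-1$ and all $\widetilde h^i_{t,q}$), and $\mathcal S_t$ is independent of $(E^i_t)_i$. The weight $\alpha^i_t$ is either $\mathbf{P}(E^i_t>0)\,(E^i_t\wedge K)$ (stochastic version) or $\mathbb{E}[E^i_t\wedge K]$ (deterministic version), where $a\wedge b=\min(a,b)$. Set $\check h^i_t=\frac{1}{\alpha^i_t}\sum_{q=1}^{E^i_t\wedge K}\widetilde h^i_{t,q}$ if $E^i_t>0$ and $\check h^i_t=0$ otherwise. Updates: $w_t=\frac{1}{s+1}\big(w_{t-1}+\sum_{i\in\mathcal S_t}(w^i_{t-1}-\eta\check h^i_t)\big)$; $w^i_t=w_t$ for $i\in\mathcal S_t$ and $w^i_t=w^i_{t-1}$ for $i\notin\mathcal S_t$. Define $\mu_t=\frac{1}{n+1}\big(w_t+\sum_{i=1}^n w^i_t\big)$. All expectations appearing are assumed finite. Smoothness: $\|\nabla f_i(x)-\nabla f_i(y)\|\le L\|x-y\|$ for all $i,x,y$, with $L>0$. Bounded variance: conditionally on everything generated before a query at $x$, $\mathbb{E}\|\widetilde g^i(x)-\nabla f_i(x)\|^2\le\sigma^2$. *)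

From HB Require Import structures.
From mathcomp Require Import all_boot all_order all_algebra.
From mathcomp Require Import all_classical all_reals all_analysis.
Set Implicit Arguments. Unset Strict Implicit. Unset Printing Implicit Defensive.
Import Order.TTheory GRing.Theory Num.Theory.
Import numFieldNormedType.Exports.
Local Open Scope classical_set_scope.
Local Open Scope ring_scope.

Definition sqnorm (R : realType) (m : nat) (v : 'rV[R]_m) : R :=
  \sum_(j < m) (v 0 j) ^+ 2.
Definition enorm (R : realType) (m : nat) (v : 'rV[R]_m) : R :=
  Num.sqrt (sqnorm v).
Definition dotp (R : realType) (m : nat) (u v : 'rV[R]_m) : R :=
  \sum_(j < m) u 0 j * v 0 j.

Section Favano.
Variables (R : realType) (dd : measure_display) (Omega : measurableType dd)
  (P : probability Omega R).

Definition vec_events (m : nat) (X : Omega -> 'rV[R]_m) : set (set Omega) :=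
  [set A | exists (j : 'I_m) (B : set R),
     measurable B /\ A = (fun w => X w 0 j) @^-1` B].
Definition disc_events (T : Type) (X : Omega -> T) : set (set Omega) :=
  [set A | exists B : set T, A = X @^-1` B].

Definition indep_families (F G : set (set Omega)) : Prop :=
  forall A B, F A -> G B -> (P (A `&` B) = P A * P B)%E.

Variables (n dim s K : nat) (eta : R) (stoch : bool) (w0 : 'rV[R]_dim).
Variables (S : nat -> Omega -> {set 'I_n}) (E : nat -> 'I_n -> Omega -> nat)
  (htilde : nat -> 'I_n -> nat -> Omega -> 'rV[R]_dim).

Definition alpha (t : nat) (i : 'I_n) (w : Omega) : R :=
  if stoch then fine (P [set x | (0 < E t i x)%N]) * (minn (E t i w) K)%:R
  else fine (\int[P]_x ((minn (E t i x) K)%:R : R)%:E).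

Definition checkh (t : nat) (i : 'I_n) (w : Omega) : 'rV[R]_dim :=
  if (0 < E t i w)%N then
    (alpha t i w)^-1 *: \sum_(1 <= q < (minn (E t i w) K).+1) htilde t i q w
  else 0.

Fixpoint state (t : nat) (w : Omega) : 'rV[R]_dim * ('I_n -> 'rV[R]_dim) :=
  match t with
  | 0 => (w0, fun _ => w0)
  | t'.+1 =>
      let wp := (state t' w).1 in
      let wl := (state t' w).2 in
      let wn := (s.+1%:R)^-1 *:
                 (wp + \sum_(i in S t'.+1 w) (wl i - eta *: checkh t'.+1 i w)) in
      (wn, fun i => if i \in S t'.+1 w then wn else wl i)
  end.

Definition wglob (t : nat) (w : Omega) : 'rV[R]_dim := (state t w).1.
Definition wloc (t : nat) (i : 'I_n) (w : Omega) : 'rV[R]_dim := (state t w).2 i.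
Definition mu (t : nat) (w : Omega) : 'rV[R]_dim :=
  (n.+1%:R)^-1 *: (wglob t w + \sum_(i < n) wloc t i w).

(* query point of the q-th local step of client i at round t (t, q >= 1) *)
Definition qpoint (t : nat) (i : 'I_n) (q : nat) (w : Omega) : 'rV[R]_dim :=
  wloc t.-1 i w - eta *: \sum_(1 <= r < q) htilde t i r w.

(* sigma-algebra of everything generated before the query (t,i,q):
   S_u, E^j_u and all htilde^j_{u,r} for rounds 1 <= u < t, and
   htilde^i_{t,r} for 1 <= r < q. *)
Definition past (t : nat) (i : 'I_n) (q : nat) : set (set Omega) :=
  <<s [set A | exists u, (1 <= u < t)%N /\
          (disc_events (S u) A \/ exists j, disc_events (E u j) A)]
      `|` [set A | exists u j r, (1 <= u < t)%N /\ vec_events (htilde u j r) A]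
      `|` [set A | exists r, (1 <= r < q)%N /\ vec_events (htilde t i r) A] >>.

Definition SE_sigma (t : nat) : set (set Omega) :=
  <<s disc_events (S t) `|` [set A | exists j, disc_events (E t j) A] >>.
Definition S_sigma (t : nat) : set (set Omega) := <<s disc_events (S t) >>.
Definition E_sigma (t : nat) : set (set Omega) :=
  <<s [set A | exists j, disc_events (E t j) A] >>.

Definition other_sigma (t : nat) : set (set Omega) :=
  <<s [set A | exists u, (1 <= u < t)%N /\
          (disc_events (S u) A \/ exists j, disc_events (E u j) A)]
      `|` [set A | exists u j r, (1 <= u <= t)%N /\ vec_events (htilde u j r) A] >>.

End Favano.

From Pilot Require Import Defs.
From HB Require Import structures.
From mathcomp Require Import all_boot all_order all_algebra.
From mathcomp Require Import all_classical all_reals all_analysis.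
From mathcomp Require Import lra ring measurable_realfun.
Set Implicit Arguments. Unset Strict Implicit. Unset Printing Implicit Defensive.
Import Order.TTheory GRing.Theory Num.Theory.
Import numFieldNormedType.Exports.
Local Open Scope classical_set_scope.
Local Open Scope ring_scope.

(* Write h_q = grad f_i at the q-th local query point of round t+1 and
   xi_q = htilde_q - h_q for the oracle noise.  The proof has three parts.
   1. A deterministic drift estimate: since the q-th query point is
      w^i_t - eta * sum_{r<q} htilde_r and grad f_i is L-Lipschitz,
        |h_q|^2 <= 2 |h_1|^2 + 4 L^2 eta^2 (q-1) sum_{r<q} (|h_r|^2 + |xi_r|^2).
   2. Taking expectations (E|xi_r|^2 <= sigma^2) and using the step-size
      condition eta < 1/(4 L K^2), a strong induction on q <= K shows
        E|h_q|^2 <= sigma^2 / K^2 + 4 E|h_1|^2.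
   3. Since h_1 = grad f_i(w^i_t), Lipschitzness around mu_t gives
      E|h_1|^2 <= 2 E|grad f_i(mu_t)|^2 + 2 L^2 E|w^i_t - mu_t|^2; the
      function grad f_i(mu_t) is not known to be measurable, so this step
      uses a comparison lemma for integrals of non-measurable functions. *)

Lemma sqr_sum_le (R : realFieldType) (I : Type) (s : seq I) (a : I -> R) :
  (\sum_(i <- s) a i) ^+ 2 <= (size s)%:R * \sum_(i <- s) a i ^+ 2.
Proof.
elim: s => [|x s IH]; first by rewrite !big_nil expr0n /= mulr0.
rewrite !big_cons /= -natr1.
set S := \sum_(i <- s) a i; set Q := \sum_(i <- s) a i ^+ 2; set N : R := (size s)%:R.
have {}IH : S ^+ 2 <= N * Q := IH.
have Q0 : 0 <= Q by apply: sumr_ge0 => i _; exact: sqr_ge0.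
have [N_gt0|N_le0] := ltrP 0 N.
  rewrite -subr_ge0 -(pmulr_rge0 _ N_gt0).
  have -> : N * ((N + 1) * (a x ^+ 2 + Q) - (a x + S) ^+ 2) =
      (N * a x - S) ^+ 2 + (N + 1) * (N * Q - S ^+ 2) by ring.
  by apply: addr_ge0; [exact: sqr_ge0 | apply: mulr_ge0; lra].
have N0 : N = 0 by apply/eqP; rewrite eq_le N_le0 ler0n.
have S0 : S = 0.
  by apply/eqP; rewrite -sqrf_eq0 eq_le sqr_ge0 andbT; rewrite N0 mul0r in IH.
by rewrite N0 S0 add0r mul1r addr0 lerDl.
Qed.

Section SquaredNorm.
Variables (R : realType) (m : nat).
Implicit Types (u v : 'rV[R]_m).

Lemma sqnorm_ge0 v : 0 <= sqnorm v.
Proof. by apply: sumr_ge0 => j _; exact: sqr_ge0. Qed.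

Lemma sqnormZ (c : R) v : sqnorm (c *: v) = c ^+ 2 * sqnorm v.
Proof. by rewrite /sqnorm mulr_sumr; apply: eq_bigr => j _; rewrite mxE exprMn. Qed.

Lemma sqnormD_le u v : sqnorm (u + v) <= 2 * sqnorm u + 2 * sqnorm v.
Proof.
rewrite /sqnorm !mulr_sumr -big_split /=; apply: ler_sum => j _.
rewrite mxE -subr_ge0.
have -> : 2 * u 0 j ^+ 2 + 2 * v 0 j ^+ 2 - (u 0 j + v 0 j) ^+ 2 = (u 0 j - v 0 j) ^+ 2
  by ring.
exact: sqr_ge0.
Qed.

Lemma sqnorm_sum_le (I : Type) (s : seq I) (v : I -> 'rV[R]_m) :
  sqnorm (\sum_(i <- s) v i) <= (size s)%:R * \sum_(i <- s) sqnorm (v i).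
Proof.
rewrite /sqnorm [X in _ <= _ * X]exchange_big /= mulr_sumr.
by apply: ler_sum => j _; rewrite summxE; exact: sqr_sum_le.
Qed.

Lemma sqnorm_le_enorm u v (L : R) :
  0 <= L -> enorm u <= L * enorm v -> sqnorm u <= L ^+ 2 * sqnorm v.
Proof.
move=> L0 uv.
have sqr_enorm w : enorm w ^+ 2 = sqnorm w := sqr_sqrtr (sqnorm_ge0 w).
rewrite -!sqr_enorm -exprMn lerXn2r ?nnegrE ?sqrtr_ge0 //.
by rewrite mulr_ge0 ?sqrtr_ge0.
Qed.

Lemma sqnorm_lipschitz_shift (g : 'rV[R]_m -> 'rV[R]_m) (L : R) x y :
  0 <= L -> enorm (g x - g y) <= L * enorm (x - y) ->
  sqnorm (g x) <= 2 * sqnorm (g y) + 2 * L ^+ 2 * sqnorm (x - y).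
Proof.
move=> L0 /(sqnorm_le_enorm L0) lip.
rewrite -[g x](subrK (g y)) addrC.
by apply: (le_trans (sqnormD_le _ _)); rewrite -mulrA lerD2l ler_wpM2l.
Qed.

End SquaredNorm.

Definition local_point (R : realType) (m : nat) (x : 'rV[R]_m) (eta : R)
    (ht : nat -> 'rV[R]_m) (q : nat) : 'rV[R]_m :=
  x - eta *: \sum_(1 <= r < q) ht r.

Lemma local_point0 (R : realType) (m : nat) (x : 'rV[R]_m) eta ht :
  local_point x eta ht 0 = x.
Proof. by rewrite /local_point big_geq // scaler0 subr0. Qed.

Lemma local_point1 (R : realType) (m : nat) (x : 'rV[R]_m) eta ht :
  local_point x eta ht 1 = x.
Proof. by rewrite /local_point big_geq // scaler0 subr0. Qed.

Lemma local_drift_bound (R : realType) (m : nat) (g : 'rV[R]_m -> 'rV[R]_m)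
    (L eta : R) (x : 'rV[R]_m) (ht : nat -> 'rV[R]_m) (q : nat) :
  0 <= L -> (forall y z, enorm (g y - g z) <= L * enorm (y - z)) ->
  sqnorm (g (local_point x eta ht q)) <= 2 * sqnorm (g x) +
    4 * L ^+ 2 * eta ^+ 2 * (q - 1)%:R * \sum_(1 <= r < q)
      (sqnorm (g (local_point x eta ht r)) + sqnorm (ht r - g (local_point x eta ht r))).
Proof.
move=> L0 lip; set p := local_point x eta ht; set Sg := \sum_(1 <= r < q) _.
have shift := sqnorm_lipschitz_shift L0 (lip (p q) x).
have drift : sqnorm (p q - x) <= eta ^+ 2 * ((q - 1)%:R * (2 * Sg)).
  rewrite /p /local_point addrAC subrr add0r -scaleNr sqnormZ sqrrN.
  rewrite ler_wpM2l ?sqr_ge0 //.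
  apply: (le_trans (sqnorm_sum_le _ _)).
  rewrite /index_iota size_iota ler_wpM2l // mulr_sumr ler_sum // => r _.
  by rewrite -{1}[ht r](subrK (g (p r))) addrC mulrDr; exact: sqnormD_le.
have L20 : 0 <= 2 * L ^+ 2 by rewrite mulr_ge0 ?sqr_ge0.
apply: (le_trans shift); rewrite lerD2l.
apply: (le_trans (ler_wpM2l L20 drift)).
by rewrite le_eqVlt; apply/orP; left; apply/eqP; ring.
Qed.

(* Elementary inequality behind the induction: under eta < 1/(4 L k^2) the
   drift of q - 1 <= k earlier steps keeps B = s2/k^2 + 4 a invariant. *)
Lemma drift_contraction (R : realFieldType) (L eta k qm a s2 : R) :
  0 < L -> 0 < eta -> 1 <= k -> 0 <= qm <= k -> 0 <= a -> 0 <= s2 ->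
  eta < (4 * L * k ^+ 2)^-1 ->
  2 * a + 4 * L ^+ 2 * eta ^+ 2 * qm * (qm * (s2 / k ^+ 2 + 4 * a + s2))
    <= s2 / k ^+ 2 + 4 * a.
Proof.
move=> L0 eta0 k1 /andP[qm0 qmk] a0 s0 small_eta.
have k2_0 : 0 < k ^+ 2 by rewrite exprn_gt0 // (lt_le_trans ltr01).
set y := (k ^+ 2)^-1; set u := eta * L.
have y0 : 0 < y by rewrite invr_gt0.
have y1 : y <= 1 by rewrite invf_le1 // expr2 mulr_ege1.
have yk : y * k ^+ 2 = 1 by rewrite mulVf ?gt_eqF.
have u0 : 0 < u by rewrite mulr_gt0.
have hu : u * (4 * k ^+ 2) < 1.
  move: small_eta; rewrite -div1r ltr_pdivlMr; last by rewrite mulr_gt0 // mulr_gt0.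
  by congr (_ < _); rewrite /u; ring.
have coef_le : 4 * L ^+ 2 * eta ^+ 2 * qm * qm <= y / 4.
  have uqk : u * qm <= u * k by rewrite ler_pM2l.
  have uq0 : 0 <= u * qm := mulr_ge0 (ltW u0) qm0.
  have : (u * qm) ^+ 2 * (16 * k ^+ 2) <= 1.
    have : (u * (4 * k ^+ 2)) ^+ 2 <= 1.
      by apply: exprn_ile1 (ltW hu); rewrite mulr_ge0 ?(ltW u0) // mulr_ge0 // ltW.
    have : (u * qm) ^+ 2 <= (u * k) ^+ 2 by rewrite !expr2 ler_pM.
    nra.
  have -> : 4 * L ^+ 2 * eta ^+ 2 * qm * qm = 4 * (u * qm) ^+ 2 by rewrite /u; ring.
  nra.
rewrite -/y mulrA.
have s2y0 : 0 <= s2 * y := mulr_ge0 s0 (ltW y0).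
have X0 : 0 <= s2 * y + 4 * a + s2 by lra.
have := ler_wpM2r X0 coef_le.
have : y * (s2 * y) <= s2 * y by rewrite ler_piMl.
have : y * a <= a by rewrite ler_piMl.
nra.
Qed.

Section RowVectorMeasurability.
Context d (T : measurableType d) (R : realType) (m : nat).

Definition measurable_rV (V : T -> 'rV[R]_m) : Prop :=
  forall j, measurable_fun setT (fun w => V w 0 j).

Lemma measurable_fun_glue (C : countType) (N : T -> C) (F : C -> T -> R) :
  (forall k, measurable [set w | N w = k]) ->
  (forall k, measurable_fun setT (F k)) ->
  measurable_fun setT (fun w => F (N w) w).
Proof.
move=> mN mF _ B mB; rewrite setTI.
have -> : (fun w => F (N w) w) @^-1` B =
    \bigcup_k ([set w | N w = k] `&` (F k @^-1` B)).
  apply/seteqP; split => w /=; first by exists (N w).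
  by case=> k _ [/= <-].
apply: countable_bigcupT_measurable; first exact: countableP.
by move=> k; apply: measurableI => //; rewrite -[_ @^-1` _]setTI; exact: mF.
Qed.

Lemma measurable_rV_glue (C : countType) (N : T -> C) (F : C -> T -> 'rV[R]_m) :
  (forall k, measurable [set w | N w = k]) ->
  (forall k, measurable_rV (F k)) -> measurable_rV (fun w => F (N w) w).
Proof.
move=> mN mF j.
by apply: (measurable_fun_glue (N := N) (F := fun k w => F k w 0 j)) => // k; exact: mF.
Qed.

Lemma measurable_rV_cst (v : 'rV[R]_m) : measurable_rV (fun=> v).
Proof. by move=> j; exact: measurable_cst. Qed.

Lemma measurable_rVD (U V : T -> 'rV[R]_m) :
  measurable_rV U -> measurable_rV V -> measurable_rV (fun w => U w + V w).
Proof.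
move=> mU mV j; under eq_fun do rewrite mxE.
exact: measurable_funD.
Qed.

Lemma measurable_rVZ (c : R) (V : T -> 'rV[R]_m) :
  measurable_rV V -> measurable_rV (fun w => c *: V w).
Proof.
move=> mV j; under eq_fun do rewrite mxE.
by apply: measurable_funM => //; exact: measurable_cst.
Qed.

Lemma measurable_rVB (U V : T -> 'rV[R]_m) :
  measurable_rV U -> measurable_rV V -> measurable_rV (fun w => U w - V w).
Proof.
move=> mU mV j; under eq_fun do rewrite !mxE.
exact: measurable_funB.
Qed.

Lemma measurable_rV_sum (I : Type) (s : seq I) (Pr : pred I) (V : I -> T -> 'rV[R]_m) :
  (forall i, measurable_rV (V i)) -> measurable_rV (fun w => \sum_(i <- s | Pr i) V i w).
Proof.
move=> mV j; under eq_fun do rewrite summxE big_mkcond.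
by apply: measurable_sum => i; case: (Pr i); [exact: mV | exact: measurable_cst].
Qed.

Lemma measurable_sqnorm (V : T -> 'rV[R]_m) :
  measurable_rV V -> measurable_fun setT (fun w => sqnorm (V w)).
Proof. by move=> mV; apply: measurable_sum => j; exact: measurable_funX. Qed.

Lemma integrable_measurable_rV (mu : {measure set T -> \bar R}) (V : T -> 'rV[R]_m) :
  (forall j, mu.-integrable setT (fun w => (V w 0 j)%:E)) -> measurable_rV V.
Proof. by move=> iV j; apply/measurable_EFinP; exact: measurable_int (iV j). Qed.

End RowVectorMeasurability.

Section NonnegativeIntegrals.
Local Open Scope ereal_scope.
Context d (T : measurableType d) (R : realType) (mu : {measure set T -> \bar R}).

(* Monotonicity of the integral of nonnegative functions holds without any
   measurability assumption, the integral being a supremum over simple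
   functions. *)
Lemma le_integral_nonneg (f g : T -> \bar R) :
  (forall x, 0 <= f x) -> (forall x, f x <= g x) ->
  \int[mu]_x f x <= \int[mu]_x g x.
Proof.
move=> f0 fg; have g0 x : 0 <= g x := le_trans (f0 x) (fg x).
rewrite !ge0_integralE //.
apply: ereal_sup_le => _ [h hf <-]; exists h => // x.
by apply: le_trans (hf x) _; rewrite /patch; case: ifP.
Qed.

Lemma integralD_nonneg (f g : T -> R) :
  measurable_fun setT f -> measurable_fun setT g ->
  (forall x, (0 <= f x)%R) -> (forall x, (0 <= g x)%R) ->
  \int[mu]_x (f x + g x)%:E = \int[mu]_x (f x)%:E + \int[mu]_x (g x)%:E.
Proof.
move=> mf mg f0 g0; under eq_integral do rewrite EFinD.
apply: ge0_integralD => //; try exact/measurable_EFinP.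
  by move=> x _; rewrite lee_fin.
by move=> x _; rewrite lee_fin.
Qed.

Lemma integralZ_nonneg (c : R) (f : T -> R) :
  measurable_fun setT f -> (0 <= c)%R -> (forall x, (0 <= f x)%R) ->
  \int[mu]_x (c * f x)%:E = c%:E * \int[mu]_x (f x)%:E.
Proof.
move=> mf c0 f0; under eq_integral do rewrite EFinM.
by apply: ge0_integralZl_EFin => // [x _|]; rewrite ?lee_fin //; exact/measurable_EFinP.
Qed.

Lemma integral_sum_nonneg (I : Type) (s : seq I) (F : I -> T -> R) :
  (forall i, measurable_fun setT (F i)) -> (forall i x, (0 <= F i x)%R) ->
  \int[mu]_x (\sum_(i <- s) F i x)%:E = \sum_(i <- s) \int[mu]_x (F i x)%:E.
Proof.
move=> mF F0; under eq_integral do rewrite -sumEFin.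
by apply: ge0_integral_sum => // [i|i x _]; [exact/measurable_EFinP | rewrite lee_fin].
Qed.

(* Integrating h <= c u + v when u is nonnegative but possibly not
   measurable: compare with the measurable minorant max(0, (h - v) / c) of u. *)
Lemma le_integral_split (h u v : T -> R) (c : R) :
  (0 < c)%R -> measurable_fun setT h -> measurable_fun setT v ->
  (forall x, 0 <= h x)%R -> (forall x, 0 <= u x)%R -> (forall x, 0 <= v x)%R ->
  (forall x, h x <= c * u x + v x)%R ->
  \int[mu]_x (h x)%:E <= c%:E * \int[mu]_x (u x)%:E + \int[mu]_x (v x)%:E.
Proof.
move=> c0 mh mv h0 u0 v0 huv.
pose u' x := Num.max 0%R ((h x - v x) / c)%R.
have mu'_meas : measurable_fun setT u'.
  apply: measurable_maxr; first exact: measurable_cst.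
  by apply: measurable_funM; [exact: measurable_funB | exact: measurable_cst].
have u'0 x : (0 <= u' x)%R by rewrite /u' le_max lexx.
have u'u x : (u' x <= u x)%R.
  by rewrite /u' ge_max u0 /= ler_pdivrMr // lerBlDr mulrC; exact: huv.
have hu' x : (h x <= c * u' x + v x)%R.
  by rewrite -lerBlDr mulrC -ler_pdivrMr // /u' le_max lexx orbT.
have mcu' : measurable_fun setT (fun x => c * u' x)%R.
  by apply: measurable_funM => //; exact: measurable_cst.
apply: (@le_trans _ _ (\int[mu]_x (c * u' x + v x)%:E)).
  apply: ge0_le_integral => //.
  - by move=> x _; rewrite lee_fin.
  - exact/measurable_EFinP.
  - by apply/measurable_EFinP; exact: measurable_funD.
  - by move=> x _; rewrite lee_fin.
rewrite (integralD_nonneg mcu' mv _ v0); last by move=> x; exact: mulr_ge0 (ltW c0) (u'0 x).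
rewrite integralZ_nonneg ?(ltW c0) // leeD2r // lee_wpmul2l ?lee_fin ?(ltW c0) //.
by apply: le_integral_nonneg => x; rewrite lee_fin.
Qed.

End NonnegativeIntegrals.

Section ExpectedDrift.
Local Open Scope ereal_scope.
Context d (T : measurableType d) (R : realType) (mu : {measure set T -> \bar R}).
Variables (H X : nat -> T -> R) (L eta sigma : R) (K : nat).
Hypotheses (L0 : (0 < L)%R) (eta0 : (0 < eta)%R) (K1 : (1 <= K)%N).
Hypothesis small_eta : (eta < (4 * L * K%:R ^+ 2)^-1)%R.
Hypotheses (mH : forall r, measurable_fun setT (H r))
           (mX : forall r, measurable_fun setT (X r)).
Hypotheses (H0 : forall r w, (0 <= H r w)%R) (X0 : forall r w, (0 <= X r w)%R).
Hypothesis noise : forall r, (1 <= r)%N -> \int[mu]_w (X r w)%:E <= (sigma ^+ 2)%:E.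
(* the pointwise drift estimate of local_drift_bound *)
Hypothesis drift : forall q w, (H q w <= 2 * H 1%N w +
  4 * L ^+ 2 * eta ^+ 2 * (q - 1)%:R * \sum_(1 <= r < q) (H r w + X r w))%R.

Let bound (a : R) : R := (sigma ^+ 2 / K%:R ^+ 2 + 4 * a)%R.

Lemma expected_drift_step (a : R) (q : nat) :
  \int[mu]_w (H 1%N w)%:E = a%:E -> (q <= K)%N ->
  (forall r, (1 <= r < q)%N -> \int[mu]_w (H r w)%:E <= (bound a)%:E) ->
  \int[mu]_w (H q w)%:E <= (bound a)%:E.
Proof.
move=> Ea qK IH.
have a0 : (0 <= a)%R by rewrite -lee_fin -Ea integral_ge0 // => w _; rewrite lee_fin.
set c := (4 * L ^+ 2 * eta ^+ 2 * (q - 1)%:R)%R.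
have c0 : (0 <= c)%R by rewrite /c !mulr_ge0 ?ler0n ?(ltW L0) ?(ltW eta0).
have mHX r : measurable_fun setT (fun w => H r w + X r w)%R by exact: measurable_funD.
have HX0 r w : (0 <= H r w + X r w)%R by rewrite addr_ge0.
have mS : measurable_fun setT (fun w => \sum_(1 <= r < q) (H r w + X r w))%R.
  exact: measurable_sum.
have S0 w : (0 <= \sum_(1 <= r < q) (H r w + X r w))%R by rewrite sumr_ge0.
have sum_le : \sum_(1 <= r < q) \int[mu]_w (H r w + X r w)%:E <=
    ((q - 1)%:R * (bound a + sigma ^+ 2))%:E.
  rewrite mulr_natl -sumr_const_nat -sumEFin big_nat_cond [leRHS]big_nat_cond.
  apply: lee_sum => r /andP[/andP[r1 rq] _].
  by rewrite integralD_nonneg // EFinD leeD ?noise ?IH ?r1.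
have m2H : measurable_fun setT (fun w => 2 * H 1%N w)%R.
  by apply: measurable_funM => //; exact: measurable_cst.
have mcS : measurable_fun setT (fun w => c * \sum_(1 <= r < q) (H r w + X r w))%R.
  by apply: measurable_funM => //; exact: measurable_cst.
apply: (@le_trans _ _
  (\int[mu]_w (2 * H 1%N w + c * \sum_(1 <= r < q) (H r w + X r w))%:E)).
  apply: ge0_le_integral => //.
  - by move=> w _; rewrite lee_fin.
  - exact/measurable_EFinP.
  - by apply/measurable_EFinP; exact: measurable_funD.
  - by move=> w _; rewrite lee_fin; exact: drift.
rewrite integralD_nonneg // => [|w|w]; [|exact: mulr_ge0 | exact: mulr_ge0 c0 (S0 w)].
rewrite !integralZ_nonneg // Ea integral_sum_nonneg //.
apply: le_trans (leeD (lexx _) (lee_wpmul2l _ sum_le)) _; first by rewrite lee_fin.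
rewrite -!EFinM -EFinD lee_fin /bound /c.
apply: drift_contraction => //.
- by rewrite ler1n.
- by rewrite ler0n ler_nat (leq_trans (leq_subr _ _)).
- exact: sqr_ge0.
Qed.

Lemma expected_drift_bound (q : nat) : (1 <= q <= K)%N ->
  \int[mu]_w (H q w)%:E <= (sigma ^+ 2 / K%:R ^+ 2)%:E + 4%:E * \int[mu]_w (H 1%N w)%:E.
Proof.
have [Einf|Efin] := eqVneq (\int[mu]_w (H 1%N w)%:E) +oo.
  by rewrite Einf gt0_muley ?lte_fin // addey // leey.
have Ea : \int[mu]_w (H 1%N w)%:E = (fine (\int[mu]_w (H 1%N w)%:E))%:E.
  rewrite fineK // ge0_fin_numE ?ltey //.
  by apply: integral_ge0 => w _; rewrite lee_fin.
rewrite Ea -EFinM -EFinD.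
elim/ltn_ind: q => q IH /andP[q1 qK].
apply: expected_drift_step => // r /andP[r1 rq].
by apply: IH => //; rewrite r1 (leq_trans (ltnW rq)).
Qed.

End ExpectedDrift.

Section FavanoMeasurability.
Variables (R : realType) (dd : measure_display) (Omega : measurableType dd)
  (P : probability Omega R) (n dim s K : nat) (eta : R) (stoch : bool)
  (w0 : 'rV[R]_dim) (Ssel : nat -> Omega -> {set 'I_n})
  (E : nat -> 'I_n -> Omega -> nat) (htilde : nat -> 'I_n -> nat -> Omega -> 'rV[R]_dim).
Hypotheses (mS : forall t (A : {set 'I_n}), measurable [set w | Ssel t w = A])
           (mE : forall t i k, measurable [set w | E t i w = k])
           (mh : forall t i q, measurable_rV (htilde t i q)).

Local Notation wglob := (wglob P s K eta stoch w0 Ssel E htilde).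
Local Notation wloc := (wloc P s K eta stoch w0 Ssel E htilde).

Lemma measurable_checkh t i : measurable_rV (checkh P K stoch E htilde t i).
Proof.
pose F k w := if (0 < k)%N then
  ((if stoch then fine (P [set x | (0 < E t i x)%N]) * (minn k K)%:R
    else fine (\int[P]_x ((minn (E t i x) K)%:R : R)%:E))^-1 *:
    \sum_(1 <= q < (minn k K).+1) htilde t i q w) else 0.
apply: (measurable_rV_glue (N := E t i) (F := F)) => // k; rewrite /F.
by case: (0 < k)%N; [apply/measurable_rVZ/measurable_rV_sum | exact: measurable_rV_cst].
Qed.

Lemma measurable_state t : measurable_rV (wglob t) /\ forall i, measurable_rV (wloc t i).
Proof.
elim: t => [|t [mg ml]]; first by split => [|i]; exact: measurable_rV_cst.
have mg' : measurable_rV (wglob t.+1).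
  have -> : wglob t.+1 = fun w => (s.+1%:R)^-1 *: (wglob t w + \sum_i
      (if i \in Ssel t.+1 w then wloc t i w - eta *: checkh P K stoch E htilde t.+1 i w
       else 0)).
    by apply/funext => w; rewrite /Defs.wglob /= -big_mkcond.
  apply/measurable_rVZ/measurable_rVD/measurable_rV_sum => // i.
  apply: (measurable_rV_glue (N := Ssel t.+1)
    (F := fun A w => if i \in A then wloc t i w - eta *: checkh P K stoch E htilde t.+1 i w
                     else 0)) => // A.
  case: (i \in A); last exact: measurable_rV_cst.
  exact/measurable_rVB/measurable_rVZ/measurable_checkh.
split => // i.
apply: (measurable_rV_glue (N := Ssel t.+1)
  (F := fun A w => if i \in A then wglob t.+1 w else wloc t i w)) => // A.
by case: (i \in A).
Qed.

Lemma measurable_consensus_gap t i :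
  measurable_fun setT (fun w => sqnorm (wloc t i w - mu P s K eta stoch w0 Ssel E htilde t w)).
Proof.
have [mg ml] := measurable_state t.
apply/measurable_sqnorm/measurable_rVB => //.
exact/measurable_rVZ/measurable_rVD/measurable_rV_sum.
Qed.

End FavanoMeasurability.

(* The information available before a query contains the sure event, so the
   oracle assumption applies to A = setT. *)
Lemma past_setT (R : realType) (dd : measure_display) (Omega : measurableType dd)
    (n dim : nat) (Ssel : nat -> Omega -> {set 'I_n}) (E : nat -> 'I_n -> Omega -> nat)
    (htilde : nat -> 'I_n -> nat -> Omega -> 'rV[R]_dim) (t : nat) (i : 'I_n) (q : nat) :
  past Ssel E htilde t i q setT.
Proof.
rewrite /past -[X in _ X]setD0.
by apply: sigma_algebraCD; exact: sigma_algebra0.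
Qed.

(* Putting 4 E|h_1|^2 <= 4 (2 E|grad f_i(mu_t)|^2 + 2 L^2 E|w^i_t - mu_t|^2)
   into the shape of the final bound. *)
Lemma scale_first_step (R : realType) (L : R) (x g e : \bar R) :
  (0 <= g)%E -> (0 <= e)%E -> (x <= 2%:E * g + (2 * L ^+ 2)%:E * e)%E ->
  (4%:E * x <= (16 * L ^+ 2)%:E * e + 8%:E * g)%E.
Proof.
move=> g0 e0 xle; apply: (le_trans (lee_wpmul2l _ xle)); first by rewrite lee_fin.
rewrite ge0_muleDr; first last.
- by rewrite mule_ge0 // lee_fin mulr_ge0 ?sqr_ge0.
- by rewrite mule_ge0.
rewrite !muleA -!EFinM addeC; apply: leeD; apply: lee_wpmul2r => //; rewrite lee_fin.
  by rewrite mulrA ler_wpM2r ?sqr_ge0 // -natrM ler_nat.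
by lra.
Qed.

Section FavanoLocalGradients.
Local Open Scope ereal_scope.
Variables (R : realType) (dd : measure_display) (Omega : measurableType dd)
  (P : probability Omega R) (n dim s K : nat) (eta L sigma : R) (stoch : bool)
  (w0 : 'rV[R]_dim) (Ssel : nat -> Omega -> {set 'I_n})
  (E : nat -> 'I_n -> Omega -> nat) (htilde : nat -> 'I_n -> nat -> Omega -> 'rV[R]_dim)
  (grad : 'rV[R]_dim -> 'rV[R]_dim) (i : 'I_n) (t : nat).
Hypotheses (mS : forall t (A : {set 'I_n}), measurable [set w | Ssel t w = A])
           (mE : forall t i k, measurable [set w | E t i w = k])
           (mh : forall t i q, measurable_rV (htilde t i q)).
Hypotheses (eta0 : (0 < eta)%R) (L0 : (0 < L)%R)
           (lip : forall x y, (enorm (grad x - grad y) <= L * enorm (x - y))%R).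

Local Notation qp := (qpoint P s K eta stoch w0 Ssel E htilde t.+1 i).
Local Notation wl := (wloc P s K eta stoch w0 Ssel E htilde t i).
Local Notation mu_t := (mu P s K eta stoch w0 Ssel E htilde t).

Hypothesis noise_int : forall r, (1 <= r)%N ->
  forall j, P.-integrable setT (fun w => ((htilde t.+1 i r w - grad (qp r w)) 0 j)%:E).
Hypothesis noise_var : forall r, (1 <= r)%N ->
  \int[P]_w (sqnorm (htilde t.+1 i r w - grad (qp r w)))%:E <= (sigma ^+ 2)%:E.

Let qpE r w : qp r w = local_point (wl w) eta (fun r => htilde t.+1 i r w) r.
Proof. by []. Qed.

(* The gradient at a query point is the stochastic gradient minus the
   (measurable) noise; the query point 0 coincides with the query point 1. *)
Lemma measurable_query_grad r : measurable_rV (fun w => grad (qp r w)).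
Proof.
have mgrad r' : (1 <= r')%N -> measurable_rV (fun w => grad (qp r' w)).
  move=> r1; have mxi := integrable_measurable_rV (noise_int r1).
  have -> : (fun w => grad (qp r' w)) =
      (fun w => htilde t.+1 i r' w - (htilde t.+1 i r' w - grad (qp r' w)))%R.
    by apply/funext => w; rewrite opprB addrC subrK.
  exact: measurable_rVB.
case: r => [|r]; last exact: mgrad.
have -> : (fun w => grad (qp 0%N w)) = (fun w => grad (qp 1%N w)).
  by apply/funext => w; rewrite !qpE local_point0 local_point1.
exact: mgrad.
Qed.

Lemma expected_local_grad_bound q :
  (eta < (4 * L * K%:R ^+ 2)^-1)%R -> (1 <= q <= K)%N ->
  \int[P]_w (sqnorm (grad (qp q w)))%:E <=
    (sigma ^+ 2 / K%:R ^+ 2)%:E + 4%:E * \int[P]_w (sqnorm (grad (qp 1%N w)))%:E.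
Proof.
move=> small_eta /[dup] /andP[q1 qK] qK'.
have K1 : (1 <= K)%N := leq_trans q1 qK.
apply: (expected_drift_bound (mu := P) (H := fun r w => sqnorm (grad (qp r w)))
  (X := fun r w => sqnorm (htilde t.+1 i r w - grad (qp r w)))
  L0 eta0 K1 small_eta _ _ _ _ noise_var _ qK') => [r|r|r w|r w|r w].
- exact/measurable_sqnorm/measurable_query_grad.
- exact/measurable_sqnorm/measurable_rVB/measurable_query_grad.
- exact: sqnorm_ge0.
- exact: sqnorm_ge0.
- by rewrite (qpE 1%N w) local_point1; exact: local_drift_bound (ltW L0) lip.
Qed.

(* Step 3: the first query point is w^i_t, compared with the average mu_t;
   the gradient at mu_t need not be measurable. *)
Lemma first_step_bound :
  \int[P]_w (sqnorm (grad (qp 1%N w)))%:E <=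
    2%:E * \int[P]_w (sqnorm (grad (mu_t w)))%:E +
    (2 * L ^+ 2)%:E * \int[P]_w (sqnorm (wl w - mu_t w))%:E.
Proof.
have L2_0 : (0 <= 2 * L ^+ 2)%R by rewrite mulr_ge0 ?sqr_ge0.
have mD := measurable_consensus_gap P s K eta stoch w0 mS mE mh t i.
rewrite -[((2 * L ^+ 2)%:E * _)%E]integralZ_nonneg //; last by move=> w; exact: sqnorm_ge0.
apply: (le_integral_split P (u := fun w => sqnorm (grad (mu_t w)))) => //.
- exact/measurable_sqnorm/measurable_query_grad.
- by apply: measurable_funM => //; exact: measurable_cst.
- by move=> w; exact: sqnorm_ge0.
- by move=> w; exact: sqnorm_ge0.
- by move=> w; rewrite mulr_ge0 ?sqnorm_ge0.
- move=> w; rewrite qpE local_point1.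
  exact: sqnorm_lipschitz_shift (ltW L0) (lip _ _).
Qed.

End FavanoLocalGradients.

Theorem mainTheorem5 (R : realType) (dd : measure_display) (Omega : measurableType dd)
  (P : probability Omega R)
  (n dim s K : nat) (eta L sigma : R) (stoch : bool) (w0 : 'rV[R]_dim)
  (f : 'I_n -> 'rV[R]_dim -> R) (grad : 'I_n -> 'rV[R]_dim -> 'rV[R]_dim)
  (Ssel : nat -> Omega -> {set 'I_n}) (E : nat -> 'I_n -> Omega -> nat)
  (htilde : nat -> 'I_n -> nat -> Omega -> 'rV[R]_dim) :
  (1 <= n)%N -> (1 <= s <= n)%N -> (1 <= K)%N -> (1 <= dim)%N ->
  0 < eta -> 0 < L ->
  (* f_i differentiable with gradient grad i *)
  (forall i x, differentiable (f i) x /\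
     forall v, 'd (f i) x v = dotp (grad i x) v) ->
  (* L-smoothness *)
  (forall i x y, enorm (grad i x - grad i y) <= L * enorm (x - y)) ->
  (* measurability of the random variables *)
  (forall t (A : {set 'I_n}), measurable [set w | Ssel t w = A]) ->
  (forall t i k, measurable [set w | E t i w = k]) ->
  (forall t i q (j : 'I_dim), measurable_fun setT (fun w => htilde t i q w 0 j)) ->
  (* law of S_t and E_t, independence structure *)
  (forall t, (1 <= t)%N -> forall A : {set 'I_n},
     P [set w | Ssel t w = A] = (if #|A| == s then ('C(n, s)%:R)^-1 else 0)%:E) ->
  (forall t i, (1 <= t)%N -> (0 < P [set w | (0 < E t i w)%N])%E) ->
  (forall t, (1 <= t)%N -> indep_families P (SE_sigma Ssel E t) (other_sigma Ssel E htilde t)) ->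
  (forall t, (1 <= t)%N -> indep_families P (S_sigma Ssel t) (E_sigma E t)) ->
  (* stochastic oracle: conditionally on the past, the noise has mean zero
     and conditional second moment at most sigma^2 *)
  (forall t i q, (1 <= t)%N -> (1 <= q)%N ->
     let xi := fun w => htilde t i q w
                 - grad i (qpoint P s K eta stoch w0 Ssel E htilde t i q w) in
     (forall j : 'I_dim, P.-integrable setT (fun w => (xi w 0 j)%:E)) /\
     (forall A, past Ssel E htilde t i q A ->
        (forall j : 'I_dim, (\int[P]_(w in A) (xi w 0 j)%:E = 0)%E) /\
        (\int[P]_(w in A) (sqnorm (xi w))%:E <= (sigma ^+ 2)%:E * P A)%E)) ->
  eta < (4 * L * (K ^ 2)%:R)^-1 ->
  forall (i : 'I_n) (t q : nat), (1 <= q <= K)%N ->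
    (\int[P]_w (sqnorm (grad i (qpoint P s K eta stoch w0 Ssel E htilde t.+1 i q w)))%:E
     <= (sigma ^+ 2 / (K ^ 2)%:R)%:E
        + (16 * L ^+ 2)%:E * \int[P]_w (sqnorm (wloc P s K eta stoch w0 Ssel E htilde t i w
                                               - mu P s K eta stoch w0 Ssel E htilde t w))%:E
        + 8%:E * \int[P]_w (sqnorm (grad i (mu P s K eta stoch w0 Ssel E htilde t w)))%:E)%E.
Proof.
move=> _ _ _ _ eta0 L0 _ lip mS mE mh _ _ _ _ oracle small_eta i t q qK.
rewrite natrX in small_eta *.
(* the oracle assumption, applied to the sure event *)
have noise_int r : (1 <= r)%N -> _ := fun r1 => (oracle t.+1 i r isT r1).1.
have noise_var r : (1 <= r)%N -> (\int[P]_w (sqnorm (htilde t.+1 i r w -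
    grad i (qpoint P s K eta stoch w0 Ssel E htilde t.+1 i r w)))%:E <= (sigma ^+ 2)%:E)%E.
  move=> r1; have [_ /(_ setT (@past_setT _ _ _ _ _ Ssel E htilde t.+1 i r))] :=
    oracle t.+1 i r isT r1.
  by case=> _; rewrite probability_setT mule1.
have mh' : forall t i q, measurable_rV (htilde t i q) := mh.
apply: (le_trans (expected_local_grad_bound mh' eta0 L0 (lip i) noise_int
  noise_var small_eta qK)).
rewrite -addeA leeD2l //; apply: scale_first_step.
- by apply: integral_ge0 => w _; exact: sqnorm_ge0.
- by apply: integral_ge0 => w _; exact: sqnorm_ge0.
- exact: first_step_bound mS mE mh' L0 (lip i) noise_int.
Qed.
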